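(* Let $\Gamma$ be a group and $\alpha\in\mathrm{Aut}(\Gamma)$. The centre $Z(G(\alpha))$ consists exactly of the elements of $K(\alpha)$ which, viewed as maps $\mathbb Q_2\to\Gamma$, are constant with value in $Z\Gamma\cap\Gamma^\alpha$.
   Context: $\{0,1\}^*$ denotes the finite words over $\{0,1\}$ (including the empty word), $|u|$ the length; $\mathfrak C=\{0,1\}^{\mathbb N}$; $\mathbb Q_2\subset\mathfrak C$ the eventually-zero sequences $u00\cdots$. A finite complete prefix code is a finite set $\{t_1,\dots,t_n\}\subset\{0,1\}^*$ such that every $x\in\mathfrak C$ has exactly one $t_i$ as prefix. Thompson's group $V$ is the group of homeomorphisms $v$ of $\mathfrak C$ for which there exist finite complete prefix codes $\{t_i\},\{s_i\}$ and a permutation $\sigma$ with $v(t_iw)=s_{\sigma(i)}w$. $K(\alpha)$ is the group of maps $a:\{0,1\}^*\to\Gamma$ (pointwise product) with $a(u)=\alpha(a(u0))$ for all $u$; $V$ acts on it by $\pi(v)(a)(s_{\sigma(i)}u)=a(t_iu)$ for all $i$, $u\in\{0,1\}^*$ (determining $\pi(v)(a)$ uniquely); $G(\alpha):=K(\alpha)\rtimes V$ with $vav^{-1}=\pi(v)(a)$. An element $a\in K(\alpha)$ is viewed as the map $\mathbb Q_2\to\Gamma$, $x\mapsto\alpha^{|u|}(a(u))$ where $x=u00\cdots$ (well defined, giving an isomorphism $K(\alpha)\cong\prod_{\mathbb Q_2}\Gamma$). $\Gamma^\alpha$ is the set of fixed points of $\alpha$ and $Z\Gamma$ the centre of $\Gamma$.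 *)

From Stdlib Require Import List Arith Lia ClassicalEpsilon.
Import ListNotations.
Set Implicit Arguments.

Record group := Group {
  carrier :> Type;
  gmul : carrier -> carrier -> carrier;
  gone : carrier;
  ginv : carrier -> carrier;
  gmulA : forall x y z, gmul x (gmul y z) = gmul (gmul x y) z;
  gmul1 : forall x, gmul gone x = x;
  gmulV : forall x, gmul (ginv x) x = gone
}.

Record aut (G : group) := Aut {
  amap :> G -> G;
  amap_mul : forall x y, amap (gmul G x y) = gmul G (amap x) (amap y);
  amap_inj : forall x y, amap x = amap y -> x = y;
  amap_surj : forall y, exists x, amap x = y
}.

Definition in_centre (G : group) (z : G) : Prop := forall y : G, gmul G z y = gmul G y z.
Definition fixed (G : group) (al : aut G) (z : G) : Prop := al z = z.

Definition word := list bool.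
Definition cantor := nat -> bool.

Definition cat (u : word) (x : cantor) : cantor :=
  fun n => if n <? length u then nth n u false else x (n - length u).

Definition is_prefix (u : word) (x : cantor) : Prop :=
  forall n, n < length u -> nth n u false = x n.

Definition complete_prefix_code (T : list word) : Prop :=
  NoDup T /\ forall x : cantor, exists! t, In t T /\ is_prefix t x.

Definition V_rep (v : cantor -> cantor) (t s : list word) (sigma : nat -> nat) : Prop :=
  complete_prefix_code t /\ complete_prefix_code s /\ length t = length s /\
  (forall i, i < length t -> sigma i < length t) /\
  (forall i j, i < length t -> j < length t -> sigma i = sigma j -> i = j) /\
  (forall i (w : cantor), i < length t ->
     v (cat (nth i t []) w) = cat (nth (sigma i) s []) w).

Definition inV (v : cantor -> cantor) : Prop := exists t s sigma, V_rep v t s sigma.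

Definition inK (G : group) (al : aut G) (a : word -> G) : Prop :=
  forall u, a u = al (a (u ++ [false])).

Definition pi_spec (G : group) (al : aut G) (v : cantor -> cantor) (a b : word -> G) : Prop :=
  inK al b /\
  forall t s sigma, V_rep v t s sigma ->
    forall i (u : word), i < length t ->
      b (nth (sigma i) s [] ++ u) = a (nth i t [] ++ u).

Definition pi (G : group) (al : aut G) (v : cantor -> cantor) (a : word -> G) : word -> G :=
  epsilon (inhabits (fun _ : word => gone G)) (pi_spec al v a).

Definition Gelt (G : group) : Type := ((word -> G) * (cantor -> cantor))%type.

Definition inG (G : group) (al : aut G) (g : Gelt G) : Prop := inK al (fst g) /\ inV (snd g).

(* (a,v)(b,w) = (a * v b v^-1, v w) = (a * pi(v)(b), v o w) *)
Definition Gmul (G : group) (al : aut G) (g h : Gelt G) : Gelt G :=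
  (fun u => gmul G (fst g u) (pi al (snd g) (fst h) u),
   fun x => snd g (snd h x)).

Definition central (G : group) (al : aut G) (g : Gelt G) : Prop :=
  inG al g /\ forall h, inG al h -> Gmul al g h = Gmul al h g.

Definition zeros : cantor := fun _ => false.
Definition inQ2 (x : cantor) : Prop := exists u : word, x = cat u zeros.

Fixpoint iter_aut (G : group) (al : aut G) (n : nat) (y : G) : G :=
  match n with O => y | S k => al (iter_aut al k y) end.

Definition Kval (G : group) (al : aut G) (a : word -> G) (x : cantor) : G :=
  epsilon (inhabits (gone G))
    (fun g => exists u : word, x = cat u zeros /\ g = iter_aut al (length u) (a u)).

(* An element (a, v) commutes with every (1, w), w in V, iff v commutes with
   all of V and pi(w) fixes a.  The first condition forces v = id, because V
   flips the bit following any word q on the cylinder of q.  The second, for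
   three explicit elements of V, gives a(00u) = a(0u), a(1u) = a(0u) and
   a(01u) = a(00u), so a is constant with an alpha-fixed value.  Commuting with
   (b, id), where b in K(alpha) may take any value at the root, puts that value
   in the centre of Gamma.  Conversely pi(w) fixes constant maps with
   alpha-fixed value, so such (z, id) is central. *)

From Stdlib Require Import List Arith Lia FinFun FunctionalExtensionality ClassicalEpsilon.
Import ListNotations.
Set Implicit Arguments.

Section GroupFacts.
Variable G : group.

Lemma gmul_idem_one (y : G) : gmul G y y = y -> y = gone G.
Proof.
  intro E.
  assert (H : gmul G (ginv G y) (gmul G y y) = gmul G (ginv G y) y) by (rewrite E; reflexivity).
  rewrite gmulA, gmulV, gmul1 in H. exact H.
Qed.

Lemma gmulVr (x : G) : gmul G x (ginv G x) = gone G.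
Proof.
  apply gmul_idem_one. rewrite <- gmulA, (gmulA _ (ginv G x) x), gmulV, gmul1.
  reflexivity.
Qed.

Lemma gmul1r (x : G) : gmul G x (gone G) = x.
Proof. rewrite <- (gmulV _ x), gmulA, gmulVr, gmul1. reflexivity. Qed.

Lemma amap_one (al : aut G) : al (gone G) = gone G.
Proof. apply gmul_idem_one. rewrite <- amap_mul, gmul1. reflexivity. Qed.

End GroupFacts.

Section Iterates.
Variables (G : group) (al : aut G).

Lemma iter_aut_add m n y : iter_aut al (m + n) y = iter_aut al m (iter_aut al n y).
Proof. induction m; simpl; congruence. Qed.

Lemma iter_aut_inj n x y : iter_aut al n x = iter_aut al n y -> x = y.
Proof. induction n; simpl; auto. intro H. apply IHn, (amap_inj al), H. Qed.

Lemma iter_aut_fixed n z : al z = z -> iter_aut al n z = z.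
Proof. intro H; induction n; simpl; congruence. Qed.

Lemma inK_pad a : inK al a -> forall k u, a u = iter_aut al k (a (u ++ repeat false k)).
Proof.
  intros Ha k; induction k as [|k IH]; intro u; simpl.
  - rewrite app_nil_r; reflexivity.
  - rewrite Ha, (IH (u ++ [false])), <- app_assoc. reflexivity.
Qed.

Lemma inK_exists_at_nil y : exists b, inK al b /\ b [] = y.
Proof.
  destruct (choice (fun x z => al z = x) (amap_surj al)) as [alinv Halinv].
  exists (fun u => Nat.iter (length u) alinv y). split; [|reflexivity].
  intro u. rewrite length_app, Nat.add_comm. simpl. rewrite Halinv. reflexivity.
Qed.

End Iterates.

Definition ccons (b : bool) (x : cantor) : cantor :=
  fun n => match n with 0 => b | S m => x m end.
Definition ctl (x : cantor) : cantor := fun n => x (S n).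

Lemma ccons_eta x : ccons (x 0) (ctl x) = x.
Proof. apply functional_extensionality; intros [|n]; reflexivity. Qed.

Lemma ccons_inj b c x y : ccons b x = ccons c y -> b = c /\ x = y.
Proof.
  intro H. split.
  - exact (f_equal (fun f => f 0) H).
  - exact (f_equal ctl H).
Qed.

Lemma cat_nil w : cat [] w = w.
Proof.
  apply functional_extensionality; intro n. unfold cat; simpl.
  rewrite Nat.sub_0_r; reflexivity.
Qed.

Lemma cat_cons b u w : cat (b :: u) w = ccons b (cat u w).
Proof. apply functional_extensionality; intros [|n]; reflexivity. Qed.

Lemma cat_app u1 u2 w : cat (u1 ++ u2) w = cat u1 (cat u2 w).
Proof.
  induction u1 as [|b u1 IH]; simpl.
  - rewrite cat_nil; reflexivity.
  - rewrite !cat_cons, IH; reflexivity.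
Qed.

Lemma cat_inj u1 u2 : (forall y, cat u1 y = cat u2 y) -> u1 = u2.
Proof.
  revert u2; induction u1 as [|b u1 IH]; intros [|c u2] H; auto.
  - specialize (H (ccons (negb c) zeros)). rewrite cat_nil, cat_cons in H.
    apply ccons_inj in H as [H _]. destruct c; discriminate.
  - specialize (H (ccons (negb b) zeros)). rewrite cat_nil, cat_cons in H.
    apply ccons_inj in H as [H _]. destruct b; discriminate.
  - assert (b = c) as <-.
    { specialize (H zeros). rewrite !cat_cons in H. apply ccons_inj in H; apply H. }
    f_equal. apply IH. intro y. specialize (H y). rewrite !cat_cons in H.
    apply ccons_inj in H; apply H.
Qed.

Lemma cat_inj_len u1 u2 y : length u1 = length u2 -> cat u1 y = cat u2 y -> u1 = u2.
Proof.
  revert u2; induction u1 as [|b u1 IH]; intros [|c u2] L H; simpl in L;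
    try discriminate; auto.
  rewrite !cat_cons in H. apply ccons_inj in H as [<- H].
  f_equal. apply (IH u2); auto.
Qed.

Lemma cat_zeros_pad u k : cat (u ++ repeat false k) zeros = cat u zeros.
Proof.
  rewrite cat_app. f_equal. induction k as [|k IH]; simpl.
  - apply cat_nil.
  - rewrite cat_cons, IH. apply functional_extensionality; intros [|n]; reflexivity.
Qed.

Lemma is_prefix_nil x : is_prefix [] x.
Proof. intros n Hn; simpl in Hn; lia. Qed.

Lemma is_prefix_cons b t x : is_prefix (b :: t) x <-> b = x 0 /\ is_prefix t (ctl x).
Proof.
  unfold is_prefix; split.
  - intro H. split.
    + apply (H 0); simpl; lia.
    + intros n Hn. apply (H (S n)); simpl; lia.
  - intros [H1 H2] [|n] Hn; simpl; auto. apply H2; simpl in Hn; lia.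
Qed.

Lemma is_prefix_cat t w : is_prefix t (cat t w).
Proof.
  induction t as [|b t IH].
  - apply is_prefix_nil.
  - rewrite cat_cons. apply is_prefix_cons; split; auto.
Qed.

Lemma is_prefix_cat_zeros t u : is_prefix t (cat u zeros) -> length t <= length u ->
  exists r, u = t ++ r.
Proof.
  revert u; induction t as [|b t IH]; intros u H L.
  - exists u; reflexivity.
  - destruct u as [|c u]; simpl in L; [lia|].
    rewrite cat_cons in H. apply is_prefix_cons in H as [Hb H]. simpl in Hb; subst b.
    destruct (IH u H) as [r ->]; [lia|]. exists r; reflexivity.
Qed.

Lemma code_pad T u : complete_prefix_code T ->
  exists m k r, m < length T /\ u ++ repeat false k = nth m T [] ++ r.
Proof.
  unfold word in *. intros [_ HT]. destruct (HT (cat u zeros)) as [t [[Hin Hp] _]].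
  destruct (In_nth _ _ [] Hin) as [m [Hm <-]].
  exists m, (length (nth m T [])).
  rewrite <- (cat_zeros_pad u (length (nth m T []))) in Hp.
  destruct (is_prefix_cat_zeros Hp) as [r Hr].
  { rewrite length_app, repeat_length; lia. }
  exists r; split; assumption.
Qed.

Lemma code_index_unique T m m' x : complete_prefix_code T ->
  m < length T -> m' < length T ->
  is_prefix (nth m T []) x -> is_prefix (nth m' T []) x -> m = m'.
Proof.
  intros [ND HT] Hm Hm' Hp Hp'. destruct (HT x) as [t [_ U]].
  apply (proj1 (NoDup_nth T []) ND); auto.
  rewrite <- (U _ (conj (nth_In _ _ Hm) Hp)), <- (U _ (conj (nth_In _ _ Hm') Hp')).
  reflexivity.
Qed.

Lemma cpc_single : complete_prefix_code [[]].
Proof.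
  split.
  - constructor; [simpl; tauto | constructor].
  - intro x. exists []. split.
    + split; [simpl; auto | apply is_prefix_nil].
    + intros t [[<- | []] _]; reflexivity.
Qed.

Lemma rep_id : V_rep (fun x => x) [[]] [[]] (fun i => i).
Proof.
  split; [apply cpc_single|]. split; [apply cpc_single|].
  split; [reflexivity|]. split; [auto|]. split; [auto|].
  intros i w Hi. simpl in Hi. destruct i; [reflexivity | lia].
Qed.

Lemma inV_id : inV (fun x => x).
Proof. exists [[]], [[]], (fun i => i). apply rep_id. Qed.

Lemma cpc_join T0 T1 : complete_prefix_code T0 -> complete_prefix_code T1 ->
  complete_prefix_code (map (cons false) T0 ++ map (cons true) T1).
Proof.
  intros [N0 C0] [N1 C1]. split.
  - apply NoDup_app; try (apply Injective_map_NoDup; auto; intros ? ? H; injection H; auto).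
    intros a Ha Hb. apply in_map_iff in Ha as [x [<- _]]. apply in_map_iff in Hb as [y [H _]].
    discriminate.
  - intro x. destruct (x 0) eqn:Hx0.
    + destruct (C1 (ctl x)) as [t [[Hin Hp] U]]. exists (true :: t). split.
      * split; [apply in_or_app; right; apply in_map; auto | apply is_prefix_cons; auto].
      * intros t' [Hin' Hp']. apply in_app_or in Hin' as [H|H];
          apply in_map_iff in H as [y [<- Hy]]; apply is_prefix_cons in Hp' as [E Hp'].
        -- congruence.
        -- f_equal. apply U; auto.
    + destruct (C0 (ctl x)) as [t [[Hin Hp] U]]. exists (false :: t). split.
      * split; [apply in_or_app; left; apply in_map; auto | apply is_prefix_cons; auto].
      * intros t' [Hin' Hp']. apply in_app_or in Hin' as [H|H];
          apply in_map_iff in H as [y [<- Hy]]; apply is_prefix_cons in Hp' as [E Hp'].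
        -- f_equal. apply U; auto.
        -- congruence.
Qed.

Definition join (v0 v1 : cantor -> cantor) (x : cantor) : cantor :=
  if x 0 then ccons true (v1 (ctl x)) else ccons false (v0 (ctl x)).

Definition join_perm (n0 : nat) (sigma0 sigma1 : nat -> nat) (i : nat) : nat :=
  if i <? n0 then sigma0 i else n0 + sigma1 (i - n0).

Lemma nth_map_cons b (T : list (list bool)) i : i < length T ->
  nth i (map (cons b) T) [] = b :: nth i T [].
Proof.
  intro H. rewrite (nth_indep _ _ [b]) by (rewrite length_map; exact H).
  apply map_nth.
Qed.

Lemma join_rep v0 t0 s0 sigma0 v1 t1 s1 sigma1 :
  V_rep v0 t0 s0 sigma0 -> V_rep v1 t1 s1 sigma1 ->
  V_rep (join v0 v1) (map (cons false) t0 ++ map (cons true) t1)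
        (map (cons false) s0 ++ map (cons true) s1) (join_perm (length t0) sigma0 sigma1).
Proof.
  intros [Ct0 [Cs0 [L0 [B0 [I0 E0]]]]] [Ct1 [Cs1 [L1 [B1 [I1 E1]]]]].
  unfold join_perm, word in *.
  split; [apply cpc_join; auto|]. split; [apply cpc_join; auto|].
  rewrite !length_app, !length_map.
  split; [lia|]. split.
  { intros i Hi. destruct (Nat.ltb_spec i (length t0)).
    - specialize (B0 i); lia.
    - specialize (B1 (i - length t0)); lia. }
  split.
  { intros i j Hi Hj. destruct (Nat.ltb_spec i (length t0)), (Nat.ltb_spec j (length t0)).
    - apply I0; auto.
    - specialize (B0 i); lia.
    - specialize (B0 j); lia.
    - intro Hij. assert (i - length t0 = j - length t0) by (apply I1; lia). lia. }
  intros i w Hi. destruct (Nat.ltb_spec i (length t0)) as [Hlt|Hge].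
  - specialize (B0 i Hlt).
    rewrite app_nth1, nth_map_cons, app_nth1, nth_map_cons by (try rewrite length_map; lia).
    rewrite !cat_cons. unfold join. simpl. rewrite <- E0 by assumption. reflexivity.
  - assert (Hb1 : sigma1 (i - length t0) < length t1) by (apply B1; lia).
    rewrite app_nth2, nth_map_cons, app_nth2, nth_map_cons by (try rewrite length_map; lia).
    rewrite !length_map, <- L0, Nat.add_comm, Nat.add_sub.
    rewrite !cat_cons. unfold join. simpl. rewrite <- E1 by lia. reflexivity.
Qed.

Lemma join_inV v0 v1 : inV v0 -> inV v1 -> inV (join v0 v1).
Proof.
  intros [t0 [s0 [sigma0 H0]]] [t1 [s1 [sigma1 H1]]].
  eexists; eexists; eexists. exact (join_rep H0 H1).
Qed.

Definition code2 : list word := [[false]; [true]].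

Lemma cpc2 : complete_prefix_code code2.
Proof. exact (cpc_join cpc_single cpc_single). Qed.

Definition flip (x : cantor) : cantor := ccons (negb (x 0)) (ctl x).

Lemma rep_flip : V_rep flip code2 code2 (fun i => 1 - i).
Proof.
  split; [apply cpc2|]. split; [apply cpc2|]. split; [reflexivity|].
  split; [intros [|[|i]] Hi; simpl in *; lia|].
  split; [intros [|[|i]] [|[|j]] Hi Hj; simpl in *; lia|].
  intros [|[|i]] w Hi; simpl in Hi; try lia; cbn [nth Nat.sub code2];
    rewrite !cat_cons; reflexivity.
Qed.

(* Flips the bit following [q] on the cylinder of [q]; identity elsewhere. *)
Fixpoint flip_at (q : word) : cantor -> cantor :=
  match q with
  | [] => flip
  | false :: q' => join (flip_at q') (fun x => x)
  | true :: q' => join (fun x => x) (flip_at q')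
  end.

Lemma inV_flip_at q : inV (flip_at q).
Proof.
  induction q as [|[] q IH]; simpl.
  - exists code2, code2, (fun i => 1 - i). apply rep_flip.
  - apply join_inV; [apply inV_id | exact IH].
  - apply join_inV; [exact IH | apply inV_id].
Qed.

Lemma ccons_head_tail b X y : y 0 = b -> X = ctl y -> ccons b X = y.
Proof. intros <- ->; apply ccons_eta. Qed.

Lemma flip_at_out q y : ~ is_prefix q y -> flip_at q y = y.
Proof.
  revert y; induction q as [|b q IH]; intros y H; simpl.
  - exfalso; apply H, is_prefix_nil.
  - rewrite is_prefix_cons in H.
    destruct b; unfold join; destruct (y 0) eqn:Hy; apply ccons_head_tail; auto;
      apply IH; intro Hp; apply H; split; congruence.
Qed.

Lemma flip_at_in q y : is_prefix q y -> flip_at q y (length q) = negb (y (length q)).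
Proof.
  revert y; induction q as [|b q IH]; intros y H; simpl.
  - reflexivity.
  - rewrite is_prefix_cons in H. destruct H as [Hb H].
    destruct b; unfold join; rewrite <- Hb; simpl; apply IH; exact H.
Qed.

(* If [v x] and [x] differ at bit [n], then [flip_at q], for [q] the first
   [n+1] bits of [v x], fixes [x] but moves [v x]. *)
Lemma eq_id_of_commute_flip_at (v : cantor -> cantor) :
  (forall q x, v (flip_at q x) = flip_at q (v x)) -> forall x, v x = x.
Proof.
  intros Hc x. apply functional_extensionality; intro n.
  destruct (Bool.bool_dec (v x n) (x n)) as [E|Hne]; [exact E|exfalso].
  set (q := map (v x) (seq 0 (S n))).
  assert (Nq : forall m, m < S n -> nth m q false = v x m).
  { intros m Hm. unfold q.
    rewrite (nth_indep _ _ (v x 0)) by (rewrite length_map, length_seq; exact Hm).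
    rewrite map_nth, seq_nth; auto. }
  assert (Lq : length q = S n) by (unfold q; rewrite length_map, length_seq; reflexivity).
  assert (P1 : is_prefix q (v x)) by (intros m Hm; rewrite Lq in Hm; auto).
  assert (P2 : ~ is_prefix q x) by (intro Hp; apply Hne; rewrite <- (Hp n), Nq; [reflexivity | lia | rewrite Lq; lia]).
  specialize (Hc q x). rewrite (flip_at_out P2) in Hc.
  apply (f_equal (fun y => y (length q))) in Hc. rewrite flip_at_in in Hc by exact P1.
  destruct (v x (length q)); discriminate.
Qed.

Definition flip1 : cantor -> cantor := flip_at [false].

Lemma rep_flip1 : V_rep flip1 (map (cons false) code2 ++ map (cons true) [[]])
  (map (cons false) code2 ++ map (cons true) [[]]) (join_perm 2 (fun i => 1 - i) (fun i => i)).
Proof. exact (join_rep rep_flip rep_id). Qed.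

Definition x0 (x : cantor) : cantor :=
  if x 0
  then (if x 1 then ccons true (ctl (ctl x)) else ccons false (ccons true (ctl (ctl x))))
  else ccons false (ccons false (ctl x)).

Lemma rep_x0 : V_rep x0 (map (cons false) [[]] ++ map (cons true) code2)
  (map (cons false) code2 ++ map (cons true) [[]]) (fun i => i).
Proof.
  split; [apply (cpc_join cpc_single cpc2)|].
  split; [apply (cpc_join cpc2 cpc_single)|].
  split; [reflexivity|]. split; [auto|]. split; [auto|].
  intros [|[|[|i]]] w Hi; simpl in Hi; try lia; cbn [nth map app code2];
    rewrite !cat_cons; reflexivity.
Qed.

Lemma inV_x0 : inV x0.
Proof. eexists; eexists; eexists. exact rep_x0. Qed.

Section PiFromRepresentation.
Variables (G : group) (al : aut G) (v : cantor -> cantor) (t s : list word) (sigma : nat -> nat).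
Hypothesis Hrep : V_rep v t s sigma.

Lemma rep_pad u : exists k i r,
  i < length t /\ u ++ repeat false k = nth (sigma i) s [] ++ r.
Proof.
  destruct Hrep as [_ [Cs [Lt [Bd [Inj _]]]]].
  destruct (code_pad u Cs) as [m [k [r [Hm Hp]]]].
  assert (Sur : bSurjective (length t) sigma) by (apply bInjective_bSurjective; assumption).
  destruct (Sur m) as [i [Hi <-]]; [lia|].
  exists k, i, r. split; assumption.
Qed.

Lemma pi_spec_value a b : pi_spec al v a b ->
  forall u k i r, i < length t -> u ++ repeat false k = nth (sigma i) s [] ++ r ->
  b u = iter_aut al k (a (nth i t [] ++ r)).
Proof.
  intros [Hb Hspec] u k i r Hi E.
  rewrite (inK_pad Hb k u), E, (Hspec _ _ _ Hrep i r Hi). reflexivity.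
Qed.

Variable a : word -> G.
Hypothesis Ha : inK al a.

(* Both paddings of [u] land in the same cylinder [s_(sigma i)], since [s] is
   a prefix code; the longer one just carries extra zeros, absorbed by [inK_pad]. *)
Lemma rep_value_le u k i r k' i' r' : k <= k' ->
  i < length t -> u ++ repeat false k = nth (sigma i) s [] ++ r ->
  i' < length t -> u ++ repeat false k' = nth (sigma i') s [] ++ r' ->
  iter_aut al k' (a (nth i' t [] ++ r')) = iter_aut al k (a (nth i t [] ++ r)).
Proof.
  destruct Hrep as [_ [Cs [Lt [Bd [Inj _]]]]].
  intros Hk Hi E Hi' E'.
  destruct (Nat.le_exists_sub k k' Hk) as [d [-> _]].
  assert (E2 : u ++ repeat false (d + k) = nth (sigma i) s [] ++ r ++ repeat false d).
  { rewrite Nat.add_comm, repeat_app, app_assoc, E, app_assoc. reflexivity. }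
  assert (Hsigma : sigma i = sigma i').
  { apply (@code_index_unique s _ _ (cat (u ++ repeat false (d + k)) zeros) Cs);
      try (rewrite <- Lt; apply Bd; assumption).
    - rewrite E2, cat_app. apply is_prefix_cat.
    - rewrite E', cat_app. apply is_prefix_cat. }
  assert (i = i') as <- by (apply Inj; assumption).
  rewrite E' in E2. apply app_inv_head in E2 as ->.
  rewrite Nat.add_comm, iter_aut_add, app_assoc, <- (inK_pad Ha). reflexivity.
Qed.

Definition pi_from_rep (u : word) : G :=
  epsilon (inhabits (gone G)) (fun g => exists k i r,
    i < length t /\ u ++ repeat false k = nth (sigma i) s [] ++ r /\
    g = iter_aut al k (a (nth i t [] ++ r))).

Lemma pi_from_rep_eq u k i r :
  i < length t -> u ++ repeat false k = nth (sigma i) s [] ++ r ->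
  pi_from_rep u = iter_aut al k (a (nth i t [] ++ r)).
Proof.
  intros Hi E. unfold pi_from_rep.
  match goal with |- epsilon ?inh ?P = _ => assert (S : P (epsilon inh P)) end.
  { apply epsilon_spec. eexists; exists k, i, r. auto. }
  destruct S as [k' [i' [r' [Hi' [E' ->]]]]].
  destruct (Nat.le_ge_cases k k').
  - apply (rep_value_le u); assumption.
  - symmetry. apply (rep_value_le u); assumption.
Qed.

Lemma pi_from_rep_inK : inK al pi_from_rep.
Proof.
  intro u. destruct (rep_pad (u ++ [false])) as [k [i [r [Hi E]]]].
  rewrite (pi_from_rep_eq (u ++ [false]) k r Hi E), (pi_from_rep_eq u (S k) r Hi).
  - reflexivity.
  - rewrite <- E, <- app_assoc. reflexivity.
Qed.

(* The defining equations for one representation imply those for all others: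
   two representations agree on a common refinement, reached by padding with zeros. *)
Lemma pi_spec_of_rep b : inK al b ->
  (forall i u, i < length t -> b (nth (sigma i) s [] ++ u) = a (nth i t [] ++ u)) ->
  pi_spec al v a b.
Proof.
  intros Hb H. split; [exact Hb|]. intros t' s' sigma' Hrep' i u Hi.
  destruct Hrep as [Ct [_ [_ [_ [_ Eq]]]]].
  destruct Hrep' as [_ [_ [_ [_ [_ Eq']]]]].
  destruct (code_pad (nth i t' [] ++ u) Ct) as [j [k [r [Hj Hp]]]].
  rewrite (inK_pad Ha k (nth i t' [] ++ u)), Hp, <- (H j r Hj).
  rewrite (inK_pad Hb k (nth (sigma' i) s' [] ++ u)).
  do 2 f_equal. apply cat_inj; intro y.
  rewrite <- app_assoc, cat_app, <- (Eq' i _ Hi), <- cat_app, app_assoc, Hp, cat_app,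
    (Eq j _ Hj), <- cat_app.
  reflexivity.
Qed.

Lemma pi_spec_exists : exists b, pi_spec al v a b.
Proof.
  exists pi_from_rep. apply pi_spec_of_rep; [exact pi_from_rep_inK|].
  intros i u Hi. apply (pi_from_rep_eq _ 0 u Hi). apply app_nil_r.
Qed.

End PiFromRepresentation.

Section PiTheory.
Variables (G : group) (al : aut G).

Lemma pi_spec_pi v a : inV v -> inK al a -> pi_spec al v a (pi al v a).
Proof.
  intros [t [s [sigma Hrep]]] Ha. unfold pi. apply epsilon_spec.
  exact (pi_spec_exists Hrep Ha).
Qed.

Lemma pi_rep v t s sigma a : V_rep v t s sigma -> inK al a ->
  forall i u, i < length t -> pi al v a (nth (sigma i) s [] ++ u) = a (nth i t [] ++ u).
Proof.
  intros Hrep Ha. apply (pi_spec_pi (ex_intro _ t (ex_intro _ s (ex_intro _ sigma Hrep))) Ha).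
  exact Hrep.
Qed.

Lemma pi_spec_unique v a b b' : inV v ->
  pi_spec al v a b -> pi_spec al v a b' -> forall u, b u = b' u.
Proof.
  intros [t [s [sigma Hrep]]] Hb Hb' u.
  destruct (rep_pad Hrep u) as [k [i [r [Hi E]]]].
  rewrite (pi_spec_value Hrep Hb u k r Hi E), (pi_spec_value Hrep Hb' u k r Hi E). reflexivity.
Qed.

Lemma pi_id b : inK al b -> forall u, pi al (fun x => x) b u = b u.
Proof.
  intro Hb. apply (pi_spec_unique inV_id (pi_spec_pi inV_id Hb)).
  split; [exact Hb|]. intros t s sigma [_ [_ [_ [_ [_ Eq]]]]] i u Hi.
  do 2 f_equal. symmetry. apply cat_inj; intro y. exact (Eq i y Hi).
Qed.

Lemma pi_const w z : al z = z -> inV w -> forall u, pi al w (fun _ => z) u = z.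
Proof.
  intros Hz Hw. assert (Hc : inK al (fun _ => z)) by (intro; symmetry; exact Hz).
  apply (pi_spec_unique Hw (pi_spec_pi Hw Hc)). split; [exact Hc | reflexivity].
Qed.

End PiTheory.

Section Centre.
Variables (G : group) (al : aut G).

(* [x0], [flip] and [flip1] turn invariance into the shift relations
   a(00u) = a(0u), a(1u) = a(0u) and a(01u) = a(00u). *)
Lemma inK_const_of_pi_invariant a : inK al a ->
  (forall w, inV w -> forall u, pi al w a u = a u) ->
  (forall u, a u = a [false]) /\ al (a [false]) = a [false].
Proof.
  intros Ha Hinv.
  assert (R00 : forall u, a (false :: false :: u) = a (false :: u)).
  { intro u. rewrite <- (Hinv _ inV_x0). exact (pi_rep rep_x0 Ha (i := 0) u ltac:(simpl; lia)). }
  assert (R1 : forall u, a (true :: u) = a (false :: u)).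
  { intro u. rewrite <- (Hinv _ (inV_flip_at [])).
    exact (pi_rep rep_flip Ha (i := 0) u ltac:(simpl; lia)). }
  assert (R01 : forall u, a (false :: true :: u) = a (false :: false :: u)).
  { intro u. rewrite <- (Hinv _ (inV_flip_at [false])).
    exact (pi_rep rep_flip1 Ha (i := 0) u ltac:(simpl; lia)). }
  assert (R0 : forall u, a (false :: u) = a [false]).
  { induction u as [|[] u IH]; [reflexivity | rewrite R01, R00; exact IH | rewrite R00; exact IH]. }
  assert (Hfix : al (a [false]) = a [false]).
  { rewrite (Ha [false]) at 2. simpl. rewrite (R00 []). reflexivity. }
  split; [|exact Hfix].
  intros [|[] u]; [rewrite Ha; exact Hfix | rewrite R1; apply R0 | apply R0].
Qed.

Lemma central_commute_V a v w : central al (a, v) -> inV w ->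
  (forall u, pi al w a u = a u) /\ (forall x, v (w x) = w (v x)).
Proof.
  intros [[Ha Hv] Hc] Hw.
  assert (H1 : inK al (fun _ => gone G)) by (intro; symmetry; apply amap_one).
  specialize (Hc (fun _ => gone G, w) (conj H1 Hw)). unfold Gmul in Hc; simpl in Hc.
  injection Hc as Ea Ev. split.
  - intro u. apply (f_equal (fun f => f u)) in Ea.
    rewrite (pi_const al (amap_one al) Hv), gmul1r, gmul1 in Ea. symmetry; exact Ea.
  - intro x. exact (f_equal (fun f => f x) Ev).
Qed.

Lemma central_root_in_centre a : central al (a, fun x => x) -> @in_centre G (a []).
Proof.
  intros [[Ha _] Hc] y. destruct (inK_exists_at_nil al y) as [b [Hb <-]].
  specialize (Hc (b, fun x => x) (conj Hb inV_id)). unfold Gmul in Hc; simpl in Hc.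
  apply (f_equal (fun g => fst g [])) in Hc; simpl in Hc.
  rewrite !pi_id in Hc by assumption. exact Hc.
Qed.

Lemma central_const z : @in_centre G z -> al z = z -> central al (fun _ => z, fun x => x).
Proof.
  intros Hz Hfix. split; [split; [intro; symmetry; exact Hfix | exact inV_id]|].
  intros [b w] [Hb Hw]. unfold Gmul; simpl. f_equal.
  apply functional_extensionality; intro u.
  rewrite pi_id, pi_const by assumption. apply Hz.
Qed.

Lemma Kval_cat a u : inK al a -> Kval al a (cat u zeros) = iter_aut al (length u) (a u).
Proof.
  intro Ha.
  assert (Hpad : forall u u', length u <= length u' -> cat u zeros = cat u' zeros ->
    iter_aut al (length u') (a u') = iter_aut al (length u) (a u)).
  { intros u1 u2 L E. destruct (Nat.le_exists_sub _ _ L) as [d [Ld _]].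
    assert (u2 = u1 ++ repeat false d) as ->.
    { apply (@cat_inj_len _ _ zeros); [rewrite length_app, repeat_length; lia|].
      rewrite cat_zeros_pad; symmetry; exact E. }
    rewrite length_app, repeat_length, iter_aut_add, <- (inK_pad Ha).
    reflexivity. }
  unfold Kval.
  match goal with |- epsilon ?inh ?P = _ => assert (S : P (epsilon inh P)) end.
  { apply epsilon_spec. exists (iter_aut al (length u) (a u)), u. auto. }
  destruct S as [u' [E ->]].
  destruct (Nat.le_ge_cases (length u) (length u')).
  - apply Hpad; auto.
  - symmetry. apply Hpad; auto.
Qed.

End Centre.

Theorem mainTheorem9 (G : group) (al : aut G) (g : Gelt G) :
  central al g <->
  (inG al g /\ (forall x : cantor, snd g x = x) /\
   exists z : G, @in_centre G z /\ fixed al z /\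
     forall x : cantor, inQ2 x -> Kval al (fst g) x = z).
Proof.
  destruct g as [a v]; simpl. split.
  - intro Hc. destruct (proj1 Hc) as [Ha Hv]; simpl in Ha, Hv.
    assert (Hid : forall x, v x = x).
    { apply eq_id_of_commute_flip_at. intros q x.
      apply (central_commute_V Hc (inV_flip_at q)). }
    assert (v = fun x => x) as -> by (apply functional_extensionality; exact Hid).
    destruct (inK_const_of_pi_invariant Ha (fun w Hw => proj1 (central_commute_V Hc Hw)))
      as [Hconst Hfix].
    split; [exact (proj1 Hc)|]. split; [reflexivity|].
    exists (a [false]). split; [|split].
    + rewrite <- (Hconst []). exact (central_root_in_centre Hc).
    + exact Hfix.
    + intros x [u ->]. rewrite Kval_cat, Hconst by exact Ha. apply iter_aut_fixed, Hfix.
  - intros [[Ha Hv] [Hid [z [Hz [Hfix HK]]]]].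
    assert (a = fun _ => z) as ->.
    { apply functional_extensionality; intro u.
      specialize (HK (cat u zeros) (ex_intro _ u eq_refl)).
      rewrite Kval_cat in HK by exact Ha.
      apply (iter_aut_inj al (length u)). rewrite HK, iter_aut_fixed by exact Hfix. reflexivity. }
    assert (v = fun x => x) as -> by (apply functional_extensionality; exact Hid).
    exact (central_const al Hz Hfix).
Qed.
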